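(* Let $((i_0,j_0),\dots,(i_{q-1},j_{q-1}))$ be a sequence of pairs in $[n]^2$ with $i_\ell<j_\ell$ defining a sorting network, and let $Q_n\subset\mathbb{R}^{n(q+1)}$ and $\tilde Q_n\subset\mathbb{R}^{n+2q}$ be as defined below. Then $Q_n$ and $\tilde Q_n$ are affinely equivalent: there exist affine maps $\tilde\pi:\mathbb{R}^{n(q+1)}\to\mathbb{R}^{n+2q}$ and $\overline{\pi}:\mathbb{R}^{n+2q}\to\mathbb{R}^{n(q+1)}$ such that $\overline{\pi}(\tilde Q_n)=Q_n$ and $\tilde\pi(Q_n)=\tilde Q_n$.
   Context: The sequence defines a sorting network if applying successively, for $\ell=0,\dots,q-1$, the map exchanging coordinates $x_{i_\ell},x_{j_\ell}$ whenever $x_{i_\ell}>x_{j_\ell}$, sends every $(\sigma(1),\dots,\sigma(n))$, $\sigma\in\mathcal{S}_n$, to $x_{id}=(1,2,\dots,n)$. Define $Q_n$ as the set of $(y_0,\dots,y_q)\in(\mathbb{R}^n)^{q+1}$ with $y_q=x_{id}$ and, for each $k=0,\dots,q-1$: $(y_{k+1})_l=(y_k)_l$ for all $l\notin\{i_k,j_k\}$; $(y_{k+1})_{i_k}+(y_{k+1})_{j_k}=(y_k)_{i_k}+(y_k)_{j_k}$; and $(y_{k+1})_{j_k}-(y_{k+1})_{i_k}\ge |(y_k)_{j_k}-(y_k)_{i_k}|$. For $\tilde w=(y_0,a_1,b_1,\dots,a_q,b_q)\in\mathbb{R}^n\times\mathbb{R}^{2q}$ define linear maps $z_0(\tilde w)=y_0$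 and, for $1\le m\le q$, $z_m(\tilde w)\in\mathbb{R}^n$ obtained from $z_{m-1}(\tilde w)$ by replacing its $i_{m-1}$-th coordinate by $a_m$ and its $j_{m-1}$-th coordinate by $b_m$; let $\alpha_m(\tilde w)$ and $\beta_m(\tilde w)$ be the $i_{m-1}$-th and $j_{m-1}$-th coordinates of $z_{m-1}(\tilde w)$. Then $\tilde Q_n=\{\tilde w\in\mathbb{R}^{n+2q}: z_q(\tilde w)=x_{id},\ a_m+b_m=\alpha_m(\tilde w)+\beta_m(\tilde w),\ b_m\ge\max\{\alpha_m(\tilde w),\beta_m(\tilde w)\}\ \forall 1\le m\le q\}$. *)

From HB Require Import structures.
From mathcomp Require Import all_boot all_order all_algebra all_fingroup.
From mathcomp Require Import classical_sets.
Set Implicit Arguments. Unset Strict Implicit. Unset Printing Implicit Defensive.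
Import Order.TTheory GRing.Theory Num.Theory.
Local Open Scope ring_scope.

Section Defs.
Variables (R : realFieldType) (n q : nat).
(* the comparator sequence: comparator l (0 <= l < q) is (ci l, cj l) *)
Variables (ci cj : 'I_q -> 'I_n).

Definition x_id : 'rV[R]_n := \row_k (k.+1)%:R.

Definition comparator (l : 'I_q) (x : 'rV[R]_n) : 'rV[R]_n :=
  if x 0 (cj l) < x 0 (ci l) then
    \row_k (if k == ci l then x 0 (cj l) else if k == cj l then x 0 (ci l) else x 0 k)
  else x.

Definition apply_net (x : 'rV[R]_n) : 'rV[R]_n :=
  foldl (fun y l => comparator l y) x (enum 'I_q).

Definition is_sorting_network : Prop :=
  forall s : 'S_n, apply_net (\row_k ((s k).+1)%:R) = x_id.

(* R^{n(q+1)} is 'rV_(q.+1 * n); y_k is the k-th row of vec_mx Y *)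
Definition yk (Y : 'rV[R]_(q.+1 * n)) (k : 'I_q.+1) : 'rV[R]_n := row k (vec_mx Y).

Definition Qn : set 'rV[R]_(q.+1 * n) :=
  [set Y | yk Y ord_max = x_id /\
    forall l : 'I_q,
      let y := yk Y (widen_ord (leqnSn q) l) in
      let y' := yk Y (lift ord0 l) in
      [/\ (forall t : 'I_n, t != ci l -> t != cj l -> y' 0 t = y 0 t),
          y' 0 (ci l) + y' 0 (cj l) = y 0 (ci l) + y 0 (cj l) &
          `|y 0 (cj l) - y 0 (ci l)| <= y' 0 (cj l) - y' 0 (ci l)]].

(* R^{n+2q}: w = (y_0, a_1, b_1, ..., a_q, b_q); y_0 = lsubmx w and
   (a_{l+1}, b_{l+1}) is row l of vec_mx (rsubmx w) : 'M_(q, 2) *)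
Definition wy0 (w : 'rV[R]_(n + q * 2)) : 'rV[R]_n := lsubmx w.
Definition wa (w : 'rV[R]_(n + q * 2)) (l : 'I_q) : R := vec_mx (rsubmx w) l 0.
Definition wb (w : 'rV[R]_(n + q * 2)) (l : 'I_q) : R := vec_mx (rsubmx w) l 1.

Fixpoint zm (w : 'rV[R]_(n + q * 2)) (m : nat) : 'rV[R]_n :=
  match m with
  | 0 => wy0 w
  | m'.+1 =>
    match @insub _ (fun k => (k < q)%N) 'I_q m' with
    | Some l => \row_t (if t == ci l then wa w l
                        else if t == cj l then wb w l else zm w m' 0 t)
    | None => zm w m'
    end
  end.

(* alpha_{l+1}, beta_{l+1} : coordinates i_l, j_l of z_l *)
Definition alpha (w : 'rV[R]_(n + q * 2)) (l : 'I_q) : R := zm w l 0 (ci l).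
Definition beta (w : 'rV[R]_(n + q * 2)) (l : 'I_q) : R := zm w l 0 (cj l).

Definition tQn : set 'rV[R]_(n + q * 2) :=
  [set w | zm w q = x_id /\
    forall l : 'I_q, wa w l + wb w l = alpha w l + beta w l /\
                     Num.max (alpha w l) (beta w l) <= wb w l].

End Defs.

Definition affine_map (R : realFieldType) (m p : nat) (f : 'rV[R]_m -> 'rV[R]_p) : Prop :=
  exists (A : 'M[R]_(m, p)) (c : 'rV[R]_p), forall x, f x = x *m A + c.

(* A point of [Qn] lists every intermediate vector y_0, ..., y_q, while a point of
   [tQn] lists only y_0 and, for each comparator, the two coordinates it may change;
   the remaining coordinates of y_(l+1) are copies of those of y_l. So [pi_tilde]
   forgets the copies and [pi_bar] replays them (y_k = z_k); both are coordinate
   selections, hence linear, and they are mutually inverse between the two sets.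
   The step constraints correspond because, once a + b = alpha + beta,
   |beta - alpha| <= b - a is equivalent to max(alpha, beta) <= b. *)

From HB Require Import structures.
From mathcomp Require Import all_boot all_order all_algebra all_fingroup.
From mathcomp Require Import classical_sets functions.
From mathcomp Require Import lra.
Import Order.TTheory GRing.Theory Num.Theory.
Local Open Scope ring_scope.
Local Open Scope classical_set_scope.

Set Implicit Arguments. Unset Strict Implicit. Unset Printing Implicit Defensive.

Lemma coord_select_affine (R : realFieldType) m p (f : 'rV[R]_m -> 'rV[R]_p) :
  (forall k : 'I_p, exists s : 'I_m, forall x, f x 0 k = x 0 s) -> affine_map f.
Proof.
move=> /fin_all_exists[s fs].
exists (\matrix_(i, j) (i == s j)%:R), 0 => x; apply/rowP => k.
rewrite addr0 !mxE fs (bigD1 (s k)) //= mxE eqxx mulr1 big1 ?addr0 // => i.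
by move=> /negbTE ni; rewrite mxE ni mulr0.
Qed.

Lemma comparator_ineqE (R : realDomainType) (x y a b : R) :
  a + b = x + y -> (`|y - x| <= b - a) = (Num.max x y <= b).
Proof.
move=> sum_ab; rewrite ler_norml ge_max.
by apply/andP/andP => -[h1 h2]; split; lra.
Qed.

Section ComparatorPolytopes.
Variables (R : realFieldType) (n q : nat) (ci cj : 'I_q -> 'I_n).
Hypothesis ci_lt_cj : forall l, (ci l < cj l)%N.

Lemma cj_neq_ci l : (cj l == ci l) = false.
Proof. by apply/negbTE; rewrite neq_ltn ci_lt_cj orbT. Qed.

Lemma zm_step (l : 'I_q) (w : 'rV[R]_(n + q * 2)) :
  zm ci cj w l.+1 = \row_t (if t == ci l then wa w l
                           else if t == cj l then wb w l else zm ci cj w l 0 t).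
Proof. by case: l => m lt_mq; rewrite /= (insubT (fun k => (k < q)%N) lt_mq). Qed.

Lemma zm_stable m (w : 'rV[R]_(n + q * 2)) : (q <= m)%N -> zm ci cj w m.+1 = zm ci cj w m.
Proof. by move=> le_qm; rewrite /= insubF // ltnNge le_qm. Qed.

Lemma zm_coord_select m t :
  exists s, forall w : 'rV[R]_(n + q * 2), zm ci cj w m 0 t = w 0 s.
Proof.
elim: m t => [|m IHm] t; first by exists (lshift _ t) => w; rewrite /= /wy0 mxE.
have [le_qm | lt_mq] := leqP q m.
  by have [s zs] := IHm t; exists s => w; rewrite zm_stable.
pose l := Ordinal lt_mq.
have [-> | ne_ti] := eqVneq t (ci l).
  by exists (rshift n (mxvec_index l 0)) => w; rewrite (zm_step l) mxE eqxx /wa !mxE.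
have [-> | ne_tj] := eqVneq t (cj l).
  by exists (rshift n (mxvec_index l 1)) => w; rewrite (zm_step l) mxE cj_neq_ci eqxx /wb !mxE.
have [s zs] := IHm t; exists s => w.
by rewrite (zm_step l) mxE (negbTE ne_ti) (negbTE ne_tj) zs.
Qed.

Definition pi_bar (w : 'rV[R]_(n + q * 2)) : 'rV[R]_(q.+1 * n) :=
  mxvec (\matrix_(k < q.+1) zm ci cj w k).

Definition pi_tilde (Y : 'rV[R]_(q.+1 * n)) : 'rV[R]_(n + q * 2) :=
  row_mx (yk Y ord0) (mxvec (\matrix_(l < q, e < 2)
    yk Y (lift ord0 l) 0 (if val e == 0%N then ci l else cj l))).

Lemma yk_pi_bar w (k : 'I_q.+1) : yk (pi_bar w) k = zm ci cj w k.
Proof. by rewrite /yk /pi_bar mxvecK rowK. Qed.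

Lemma yk_pi_bar_lift w (l : 'I_q) : yk (pi_bar w) (lift ord0 l) = zm ci cj w l.+1.
Proof. exact: yk_pi_bar. Qed.

Lemma yk_pi_bar_widen w (l : 'I_q) : yk (pi_bar w) (widen_ord (leqnSn q) l) = zm ci cj w l.
Proof. exact: yk_pi_bar. Qed.

Lemma wy0_pi_tilde Y : wy0 (pi_tilde Y) = yk Y ord0.
Proof. by rewrite /wy0 /pi_tilde row_mxKl. Qed.

Lemma wa_pi_tilde Y l : wa (pi_tilde Y) l = yk Y (lift ord0 l) 0 (ci l).
Proof. by rewrite /wa /pi_tilde row_mxKr mxvecK mxE. Qed.

Lemma wb_pi_tilde Y l : wb (pi_tilde Y) l = yk Y (lift ord0 l) 0 (cj l).
Proof. by rewrite /wb /pi_tilde row_mxKr mxvecK mxE. Qed.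

Lemma pi_bar_affine : affine_map pi_bar.
Proof.
apply: coord_select_affine => /mxvec_indexP[k t].
by have [s zs] := zm_coord_select k t; exists s => w; rewrite /pi_bar mxvecE mxE zs.
Qed.

Lemma pi_tilde_affine : affine_map pi_tilde.
Proof.
apply: coord_select_affine => k; rewrite /pi_tilde.
case: (split_ordP k) => [t -> | j ->]; last case/mxvec_indexP: j => l e.
  by exists (mxvec_index ord0 t) => Y; rewrite row_mxEl /yk !mxE.
exists (mxvec_index (lift ord0 l) (if val e == 0%N then ci l else cj l)) => Y.
by rewrite row_mxEr mxvecE !mxE.
Qed.

Lemma pi_tildeK : cancel pi_bar pi_tilde.
Proof.
move=> w; rewrite /pi_tilde -[RHS]hsubmxK yk_pi_bar; congr row_mx.
rewrite -[RHS]vec_mxK; congr mxvec; apply/matrixP => l e.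
rewrite mxE yk_pi_bar_lift zm_step mxE.
case: e => -[|[|//]] e /=; first by rewrite eqxx /wa; congr (vec_mx _ _ _); exact: val_inj.
by rewrite cj_neq_ci eqxx /wb; congr (vec_mx _ _ _); exact: val_inj.
Qed.

Lemma pi_bar_tQn w : tQn ci cj w -> Qn ci cj (pi_bar w).
Proof.
case=> zq_id steps; split; first by rewrite yk_pi_bar.
move=> l /=; rewrite yk_pi_bar_lift yk_pi_bar_widen zm_step !mxE eqxx cj_neq_ci eqxx.
have [sum_ab max_le] := steps l; split => //.
- by move=> t /negbTE ne_ti /negbTE ne_tj; rewrite mxE ne_ti ne_tj.
- by rewrite comparator_ineqE.
Qed.

Lemma zm_pi_tilde Y (k : 'I_q.+1) : Qn ci cj Y -> zm ci cj (pi_tilde Y) k = yk Y k.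
Proof.
case=> _ steps; case: k => m; elim: m => [|m IHm] lt_mq.
  by rewrite /= wy0_pi_tilde; congr yk; exact: val_inj.
pose l := Ordinal (lt_mq : (m < q)%N).
have lift_l : lift ord0 l = Ordinal lt_mq by exact: val_inj.
have [same_off _ _] := steps l; rewrite /= lift_l in same_off.
rewrite (zm_step l); apply/rowP => t; rewrite mxE.
have [-> | ne_ti] := eqVneq t (ci l); first by rewrite wa_pi_tilde lift_l.
have [-> | ne_tj] := eqVneq t (cj l); first by rewrite wb_pi_tilde lift_l.
rewrite same_off // (IHm (ltnW lt_mq)); congr (yk _ _ _ _); exact: val_inj.
Qed.

Lemma pi_tilde_Qn Y : Qn ci cj Y -> tQn ci cj (pi_tilde Y).
Proof.
move=> QY; split; first by rewrite (zm_pi_tilde ord_max QY) QY.1.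
move=> l; have [_ sum_ab norm_le] := QY.2 l.
rewrite /alpha /beta wa_pi_tilde wb_pi_tilde (zm_pi_tilde (widen_ord (leqnSn q) l) QY).
by rewrite -(comparator_ineqE sum_ab).
Qed.

Lemma pi_barK_on Y : Qn ci cj Y -> pi_bar (pi_tilde Y) = Y.
Proof.
move=> QY; rewrite /pi_bar -[RHS]vec_mxK; congr mxvec.
by apply/row_matrixP => k; rewrite rowK (zm_pi_tilde k QY).
Qed.

End ComparatorPolytopes.

Theorem claim3 (R : realFieldType) (n q : nat) (ci cj : 'I_q -> 'I_n) :
  (forall l : 'I_q, (ci l < cj l)%N) ->
  is_sorting_network R ci cj ->
  exists (pt : 'rV[R]_(q.+1 * n) -> 'rV[R]_(n + q * 2))
         (pb : 'rV[R]_(n + q * 2) -> 'rV[R]_(q.+1 * n)),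
    [/\ affine_map pt, affine_map pb,
        pb @` tQn ci cj = Qn ci cj & pt @` Qn ci cj = tQn ci cj].
Proof.
move=> ci_lt_cj _; exists (pi_tilde ci cj), (pi_bar ci cj).
split; [exact: pi_tilde_affine | exact: pi_bar_affine | |].
- apply: surj_image_eq; first by move=> _ [w tQw <-]; exact: pi_bar_tQn.
  by move=> Y QY; exists (pi_tilde ci cj Y); [exact: pi_tilde_Qn | exact: pi_barK_on].
- apply: surj_image_eq; first by move=> _ [Y QY <-]; exact: pi_tilde_Qn.
  by move=> w tQw; exists (pi_bar ci cj w); [exact: pi_bar_tQn | exact: pi_tildeK].
Qed.
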